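(* Let $P$ be the transition matrix of a reducible classical Markov chain on a countable state space $\Lambda$, and consider the associated OQRW with $\mathcal H=\mathbb C$, $\mathcal K=\ell^2(\Lambda)$, $B^i_j=\sqrt{P(j,i)}U^i_j$ ($|U^i_j|=1$). Then there exists an initial probability measure $\rho^{(0)}$ on $\Lambda$ such that the QMC $(\rho^{(0)},(\mathcal E^{(n)})_{n\ge0})$ associated with this OQRW is reducible.
   Context: A stochastic matrix $P$ has nonnegative entries with $\sum_jP(i,j)=1$. $i\to j$ means $P^n(i,j)>0$ for some $n\in\mathbb N$; the chain is irreducible if $i\to j$ and $j\to i$ for all $i,j\in\Lambda$, and reducible otherwise. States of $\mathcal B$ are probability measures $\rho=(\rho_i)$ identified with $\sum_i\rho_i|i\rangle\langle i|$. The OQRW: $\mathcal M(\rho)=\sum_i(\sum_jB^i_j\rho_j\overline{B^i_j})|i\rangle\langle i|$, $\rho^{(n)}=\mathcal M^n(\rho^{(0)})$, $\Lambda(\rho^{(n)})=\{i:\rho^{(n)}_i\ne0\}$, $M^i_j=B^i_j|i\rangle\langle j|$. $\mathcal B$ is the commutative algebra of bounded diagonal operators $x=\sum_jx_j|j\rangle\langle j|$ on $\ell^2(\Lambda)$, $\mathcal A=\bigotimes_{k\in\mathbb Z_+}\mathcal B$. Transition expectations: $\mathcal E^{(n)}(x\otimes y)=\sum_{j\in\Lambda(\rho^{(n)})}\sum_i\frac{\mathrm{Tr}((\rho^{(n)}_j|j\rangle\langle j|)x)}{\rho^{(n)}_j}{M^i_j}^*yM^i_j$ (equivalently $\mathcal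 E^{(n)}(x\otimes y)=P_{\rho^{(n)}}xPy$ with $P_{\rho^{(n)}}$ the indicator of the support of $\rho^{(n)}$ and $(Py)_j=\sum_iP(j,i)y_i$). $\bar b(n)$ is the strong limit as $k\to\infty$ of $\mathcal E^{(n)}(I\otimes\cdots\otimes\mathcal E^{(n+k)}(I\otimes I))$; $E_{0]}(a_0\otimes\cdots\otimes a_n\otimes I\otimes\cdots)=\mathcal E^{(0)}(a_0\otimes\cdots\otimes\mathcal E^{(n)}(a_n\otimes\bar b(n+1)))$, extended to $\mathcal A$ by limits. The QMC is reducible if there exist a projection $p\in\mathcal B$, $p\ne0,I$, and $n_0$ with $E_{0]}(p_{[n_0}ap_{[n_0})=E_{0]}(a)$ for all $a\in\mathcal A$, where $p_{[n}=I\otimes\cdots\otimes I\otimes p\otimes p\otimes\cdots$ ($p$ from the $n$-th position on); otherwise irreducible. *)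

From Stdlib Require Import Reals List ClassicalEpsilon.
Open Scope R_scope.

Record Cx := mkCx { re : R ; im : R }.
Definition C0 : Cx := mkCx 0 0.
Definition C1 : Cx := mkCx 1 0.
Definition Creal (r : R) : Cx := mkCx r 0.
Definition Cadd (z w : Cx) : Cx := mkCx (re z + re w) (im z + im w).
Definition Csub (z w : Cx) : Cx := mkCx (re z - re w) (im z - im w).
Definition Cmul (z w : Cx) : Cx :=
  mkCx (re z * re w - im z * im w) (re z * im w + im z * re w).
Definition Cscale (r : R) (z : Cx) : Cx := mkCx (r * re z) (r * im z).
Definition Cconj (z : Cx) : Cx := mkCx (re z) (- im z).
Definition cmod2 (z : Cx) : R := re z * re z + im z * im z.

Section Sums.
Context {L : Type}.

Definition finsum (l : list L) (f : L -> R) : R :=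
  fold_right (fun x acc => f x + acc) 0 l.

(* f is summable with sum s (limit along the net of finite subsets) *)
Definition HasSum (f : L -> R) (s : R) : Prop :=
  forall eps, eps > 0 -> exists l0 : list L, NoDup l0 /\
    forall l, NoDup l -> incl l0 l -> Rabs (finsum l f - s) < eps.

(* the sum (chosen by epsilon; meaningful when f is summable) *)
Definition tsum (f : L -> R) : R := epsilon (inhabits 0) (HasSum f).
Definition ctsum (f : L -> Cx) : Cx :=
  mkCx (tsum (fun x => re (f x))) (tsum (fun x => im (f x))).
End Sums.

Definition stochastic {L : Type} (P : L -> L -> R) : Prop :=
  forall i, (forall j, 0 <= P i j) /\ HasSum (P i) 1.

(* Ppow P n = P^(n+1) *)
Fixpoint Ppow {L : Type} (P : L -> L -> R) (n : nat) : L -> L -> R :=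
  match n with
  | O => P
  | S k => fun i j => tsum (fun l => Ppow P k i l * P l j)
  end.

Definition leads {L : Type} (P : L -> L -> R) (i j : L) : Prop :=
  exists n, Ppow P n i j > 0.

Definition irreducible_chain {L : Type} (P : L -> L -> R) : Prop :=
  forall i j, leads P i j /\ leads P j i.
Definition reducible_chain {L : Type} (P : L -> L -> R) : Prop :=
  ~ irreducible_chain P.

Definition prob_measure {L : Type} (rho : L -> R) : Prop :=
  (forall i, 0 <= rho i) /\ HasSum rho 1.

Section QMC.
Context {L : Type} (P : L -> L -> R) (U : L -> L -> Cx) (rho0 : L -> R).

Definition Bop (i j : L) : Cx := Cscale (sqrt (P j i)) (U i j).

Definition Mmap (rho : L -> R) : L -> R :=
  fun i => tsum (fun j => re (Cmul (Cmul (Bop i j) (Creal (rho j))) (Cconj (Bop i j)))).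

Definition rho_n (n : nat) : L -> R := Nat.iter n Mmap rho0.

(* E^(n)(x (x) y), as a diagonal operator (function on L):
   entry j = [j in supp rho^(n)] (Tr(rho_j |j><j| x)/rho_j) * sum_i (M^i_j)^* y M^i_j *)
Definition Ecal (n : nat) (x y : L -> Cx) : L -> Cx :=
  fun j =>
    if Req_EM_T (rho_n n j) 0 then C0
    else Cmul (Cscale (/ rho_n n j) (Cscale (rho_n n j) (x j)))
              (ctsum (fun i => Cmul (Cmul (Cconj (Bop i j)) (y i)) (Bop i j))).

Definition Iop : L -> Cx := fun _ => C1.

(* strong operator convergence of diagonal operators on l^2(L) *)
Definition StrongLim (d : nat -> L -> Cx) (d0 : L -> Cx) : Prop :=
  forall v : L -> Cx, (exists s, HasSum (fun j => cmod2 (v j)) s) ->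
    Un_cv (fun k => tsum (fun j => cmod2 (Cmul (Csub (d k j) (d0 j)) (v j)))) 0.

Fixpoint iterE (n k : nat) : L -> Cx :=
  match k with
  | O => Ecal n Iop Iop
  | S k' => Ecal n Iop (iterE (S n) k')
  end.

Definition bbar (n : nat) : L -> Cx :=
  epsilon (inhabits Iop) (fun d => StrongLim (fun k => iterE n k) d).

(* E_{0]} on local elements, started at position n:
   Eseq n [a_n; ...; a_m] = E^(n)(a_n (x) ... E^(m)(a_m (x) bbar(m+1))) *)
Fixpoint Eseq (n : nat) (a : list (L -> Cx)) : L -> Cx :=
  match a with
  | nil => bbar n
  | x :: a' => Ecal n x (Eseq (S n) a')
  end.

(* E_{0]}(a_0 (x) ... (x) a_m (x) I (x) I ...) *)
Definition E0 (a : list (L -> Cx)) : L -> Cx := Eseq 0 a.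

Definition bounded_op (x : L -> Cx) : Prop :=
  exists M, forall j, cmod2 (x j) <= M.

Definition projection (p : L -> Cx) : Prop :=
  forall j, Cmul (p j) (p j) = p j /\ Cconj (p j) = p j.

(* truncation at length m + size a of  p_{[n0} a p_{[n0} *)
Definition sandwich (p : L -> Cx) (n0 m : nat) (a : list (L -> Cx)) : list (L -> Cx) :=
  map (fun k => if Nat.ltb k n0 then nth k a Iop
                else fun j => Cmul (Cmul (p j) (nth k a Iop j)) (p j))
      (seq 0 (m + length a)).

Definition QMC_reducible : Prop :=
  exists (p : L -> Cx) (n0 : nat),
    projection p /\ (exists j, p j <> C0) /\ (exists j, p j <> C1) /\
    forall a : list (L -> Cx), Forall bounded_op a ->
      StrongLim (fun m => E0 (sandwich p n0 m a)) (E0 a).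
End QMC.

(* Reducibility of the chain gives states a, b with a not leading to b.  Start
   the walk at a: for n >= 1 the law rho^(n) equals P^n(a, .), so it is
   supported in the set A of states reachable from a, which contains a
   successor of a but not b.  Each E^(n) reads its first argument only on
   supp rho^(n) and its second only on supp rho^(n+1), so inserting the
   indicator p of A from position 1 on changes no value of E_{0]}. *)
From Stdlib Require Import Reals List.
From Stdlib Require Import ClassicalEpsilon Classical FunctionalExtensionality Lra.
Open Scope R_scope.

Section Summation.
Context {L : Type}.

Definition Ldec (x y : L) : {x = y} + {x <> y} := excluded_middle_informative (x = y).

Definition dirac (a : L) : L -> R := fun x => if Ldec x a then 1 else 0.

Lemma finsum_le (l : list L) f g :
  (forall x, In x l -> f x <= g x) -> finsum l f <= finsum l g.
Proof.
  induction l as [|x l IH]; intros Hfg; simpl; [lra|].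
  assert (f x <= g x) by (apply Hfg; left; auto).
  assert (finsum l f <= finsum l g) by (apply IH; intros; apply Hfg; right; auto).
  lra.
Qed.

Lemma finsum_eq0 (l : list L) f : (forall x, In x l -> f x = 0) -> finsum l f = 0.
Proof.
  induction l as [|x l IH]; intros Hf; simpl; [lra|].
  rewrite Hf by (left; auto). rewrite IH by (intros; apply Hf; right; auto). lra.
Qed.

Lemma finsum_ge0 (l : list L) f : (forall x, 0 <= f x) -> 0 <= finsum l f.
Proof. intros Hf. induction l as [|x l IH]; simpl; [lra|]. specialize (Hf x). lra. Qed.

Lemma finsum_add (l : list L) f g :
  finsum l (fun x => f x + g x) = finsum l f + finsum l g.
Proof. induction l as [|x l IH]; simpl; [lra|]. rewrite IH. lra. Qed.

Lemma finsum_scal (l : list L) c f : finsum l (fun x => c * f x) = c * finsum l f.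
Proof. induction l as [|x l IH]; simpl; [lra|]. rewrite IH. lra. Qed.

Lemma NoDup_remove_Ldec (l : list L) x : NoDup l -> NoDup (remove Ldec x l).
Proof.
  induction l as [|y l IH]; intros Hl; simpl; [constructor|].
  inversion Hl; subst. destruct (Ldec x y).
  - apply IH; auto.
  - constructor; [|apply IH; auto]. intros Hin. apply in_remove in Hin. tauto.
Qed.

Lemma finsum_remove (l : list L) x f : NoDup l -> In x l ->
  finsum l f = f x + finsum (remove Ldec x l) f.
Proof.
  induction l as [|y l IH]; intros Hl Hx; [destruct Hx|].
  inversion Hl; subst. simpl. destruct (Ldec x y).
  - subst. rewrite notin_remove by auto. lra.
  - destruct Hx as [->|Hx]; [congruence|]. simpl. rewrite (IH H2 Hx). lra.
Qed.

Lemma finsum_incl_le (l0 l : list L) f : (forall x, 0 <= f x) ->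
  NoDup l0 -> NoDup l -> incl l0 l -> finsum l0 f <= finsum l f.
Proof.
  intros Hf. revert l. induction l0 as [|x l0 IH]; intros l H0 Hl Hincl.
  - apply finsum_ge0; auto.
  - inversion H0; subst. simpl.
    rewrite (finsum_remove l x f Hl) by (apply Hincl; left; auto).
    enough (finsum l0 f <= finsum (remove Ldec x l) f) by lra.
    apply IH; auto using NoDup_remove_Ldec.
    intros y Hy. apply in_in_remove; [intros ->; tauto | apply Hincl; right; auto].
Qed.

(* Any two finite index lists are dominated by their duplicate-free union, so the
   convergence along finite subsets can be tested on a common list. *)
Definition unionl (l1 l2 : list L) : list L := nodup Ldec (l1 ++ l2).

Lemma NoDup_unionl l1 l2 : NoDup (unionl l1 l2).
Proof. apply NoDup_nodup. Qed.
Lemma incl_unionl_l l1 l2 : incl l1 (unionl l1 l2).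
Proof. intros x Hx. apply nodup_In, in_or_app; auto. Qed.
Lemma incl_unionl_r l1 l2 : incl l2 (unionl l1 l2).
Proof. intros x Hx. apply nodup_In, in_or_app; auto. Qed.

Lemma HasSum_le (f g : L -> R) s t :
  HasSum f s -> HasSum g t -> (forall x, f x <= g x) -> s <= t.
Proof.
  intros Hs Ht Hfg. destruct (Rle_dec s t) as [|Hts]; auto. exfalso.
  destruct (Hs ((s - t) / 2)) as [l0 [_ H0]]; [lra|].
  destruct (Ht ((s - t) / 2)) as [l1 [_ H1]]; [lra|].
  specialize (H0 _ (NoDup_unionl l0 l1) (incl_unionl_l l0 l1)).
  specialize (H1 _ (NoDup_unionl l0 l1) (incl_unionl_r l0 l1)).
  apply Rabs_def2 in H0, H1.
  pose proof (finsum_le (unionl l0 l1) f g (fun x _ => Hfg x)). lra.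
Qed.

Lemma HasSum_unique (f : L -> R) s t : HasSum f s -> HasSum f t -> s = t.
Proof.
  intros Hs Ht. apply Rle_antisym; eapply HasSum_le; eauto; intros; lra.
Qed.

Lemma tsum_HasSum (f : L -> R) s : HasSum f s -> tsum f = s.
Proof.
  intros Hs. apply (HasSum_unique f); auto.
  unfold tsum. apply epsilon_spec. exists s; auto.
Qed.

Lemma HasSum_0 (f : L -> R) : (forall x, f x = 0) -> HasSum f 0.
Proof.
  intros Hf eps Heps. exists nil. split; [constructor|]. intros l _ _.
  rewrite finsum_eq0 by auto. rewrite Rminus_0_r, Rabs_R0. lra.
Qed.

Lemma tsum_0 (f : L -> R) : (forall x, f x = 0) -> tsum f = 0.
Proof. intros. apply tsum_HasSum, HasSum_0; auto. Qed.

Lemma HasSum_add (f g : L -> R) s t :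
  HasSum f s -> HasSum g t -> HasSum (fun x => f x + g x) (s + t).
Proof.
  intros Hs Ht eps Heps.
  destruct (Hs (eps / 2)) as [l0 [_ H0]]; [lra|].
  destruct (Ht (eps / 2)) as [l1 [_ H1]]; [lra|].
  exists (unionl l0 l1). split; [apply NoDup_unionl|]. intros l Hl Hincl.
  specialize (H0 l Hl (incl_tran (incl_unionl_l _ _) Hincl)).
  specialize (H1 l Hl (incl_tran (incl_unionl_r _ _) Hincl)).
  apply Rabs_def2 in H0, H1.
  apply Rabs_def1; rewrite finsum_add; lra.
Qed.

Lemma HasSum_finsum {I : Type} (l : list I) (h : L -> I -> R) (s : I -> R) :
  (forall i, In i l -> HasSum (fun j => h j i) (s i)) ->
  HasSum (fun j => finsum l (h j)) (finsum l s).
Proof.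
  induction l as [|i l IH]; intros Hh; simpl.
  - apply HasSum_0; auto.
  - apply (HasSum_add (fun j => h j i) (fun j => finsum l (h j))).
    + apply Hh; left; auto.
    + apply IH; intros; apply Hh; right; auto.
Qed.

Lemma HasSum_single (f : L -> R) a : (forall x, x <> a -> f x = 0) -> HasSum f (f a).
Proof.
  intros Hf eps Heps. exists (a :: nil). split; [repeat constructor; intros []|].
  intros l Hl Hincl. rewrite (finsum_remove l a f Hl) by (apply Hincl; left; auto).
  rewrite (finsum_eq0 (remove Ldec a l)).
  - apply Rabs_def1; lra.
  - intros x Hx. apply in_remove in Hx. apply Hf; tauto.
Qed.

Lemma HasSum_dirac a : HasSum (dirac a) 1.
Proof.
  replace 1 with (dirac a a) by (unfold dirac; destruct (Ldec a a); congruence).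
  apply HasSum_single. intros x Hx. unfold dirac. destruct (Ldec x a); tauto.
Qed.

Lemma finsum_le_HasSum (f : L -> R) s l :
  (forall x, 0 <= f x) -> HasSum f s -> NoDup l -> finsum l f <= s.
Proof.
  intros Hf Hs Hl. destruct (Rle_dec (finsum l f) s) as [|Hgt]; auto. exfalso.
  destruct (Hs (finsum l f - s)) as [l0 [_ H0]]; [lra|].
  specialize (H0 _ (NoDup_unionl l0 l) (incl_unionl_l l0 l)). apply Rabs_def2 in H0.
  pose proof (finsum_incl_le l (unionl l0 l) f Hf Hl (NoDup_unionl _ _)
                (incl_unionl_r _ _)).
  lra.
Qed.

Lemma term_le_HasSum (f : L -> R) s j : (forall x, 0 <= f x) -> HasSum f s -> f j <= s.
Proof.
  intros Hf Hs. pose proof (finsum_le_HasSum f s (j :: nil) Hf Hs) as Hj.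
  simpl in Hj. enough (f j + 0 <= s) by lra. apply Hj. repeat constructor; intros [].
Qed.

Lemma HasSum_ge0 (f : L -> R) s : (forall x, 0 <= f x) -> HasSum f s -> 0 <= s.
Proof. intros Hf Hs. apply (HasSum_le (fun _ => 0) f 0 s); auto using HasSum_0. Qed.

(* The sum is the supremum of the finite partial sums. *)
Lemma HasSum_bounded (f : L -> R) B : (forall x, 0 <= f x) ->
  (forall l, NoDup l -> finsum l f <= B) -> exists s, HasSum f s /\ s <= B.
Proof.
  intros Hf HB.
  set (E := fun r => exists l, NoDup l /\ r = finsum l f).
  assert (HEb : bound E) by (exists B; intros r [l [Hl ->]]; auto).
  assert (HEne : exists r, E r) by (exists 0, nil; split; [constructor|reflexivity]).
  destruct (completeness E HEb HEne) as [s [Hub Hlub]].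
  exists s. split.
  - intros eps Heps.
    assert (Hl0 : exists l, NoDup l /\ finsum l f > s - eps).
    { apply NNPP. intros Hno. enough (s <= s - eps) by lra.
      apply Hlub. intros r [l [Hl ->]]. apply Rnot_lt_le. intros Hlt.
      apply Hno. exists l. split; auto. }
    destruct Hl0 as [l0 [Hl0 Hgt]]. exists l0. split; auto. intros l Hl Hincl.
    pose proof (finsum_incl_le l0 l f Hf Hl0 Hl Hincl).
    assert (finsum l f <= s) by (apply Hub; exists l; auto).
    apply Rabs_def1; lra.
  - apply Hlub. intros r [l [Hl ->]]. auto.
Qed.

End Summation.

Definition subprob {L : Type} (r : L -> R) : Prop :=
  (forall i, 0 <= r i) /\ (forall l, NoDup l -> finsum l r <= 1).

Lemma prob_measure_subprob {L : Type} (r : L -> R) : prob_measure r -> subprob r.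
Proof.
  intros [Hr Hsum]. split; auto. intros l Hl. apply (finsum_le_HasSum r); auto.
Qed.

Lemma prob_measure_dirac {L : Type} (a : L) : prob_measure (dirac a).
Proof.
  split; [|apply HasSum_dirac]. intros x. unfold dirac. destruct (Ldec x a); lra.
Qed.

Lemma reducible_chain_not_leads {L : Type} (P : L -> L -> R) :
  reducible_chain P -> exists a b, ~ leads P a b.
Proof.
  intros Hred. apply NNPP. intros Hall. apply Hred. intros i j.
  split; apply NNPP; intros Hl; apply Hall; eauto.
Qed.

Section Chain.
Context {L : Type} (P : L -> L -> R) (Hstoch : stochastic P).

Definition evolve (r : L -> R) (i : L) : R := tsum (fun j => r j * P j i).

Lemma P_ge0 j i : 0 <= P j i.
Proof. apply (proj1 (Hstoch j)). Qed.

Lemma P_row j : HasSum (P j) 1.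
Proof. apply (proj2 (Hstoch j)). Qed.

Lemma P_le1 j i : P j i <= 1.
Proof. apply (term_le_HasSum (P j)); [apply P_ge0 | apply P_row]. Qed.

Lemma subprob_row j : subprob (P j).
Proof. apply prob_measure_subprob. split; [apply P_ge0 | apply P_row]. Qed.

Lemma row_has_pos a : exists k, P a k > 0.
Proof.
  apply NNPP. intros Hno.
  assert (Hrow0 : HasSum (P a) 0).
  { apply HasSum_0. intros x. apply Rle_antisym; [|apply P_ge0].
    apply Rnot_lt_le. intros Hx. apply Hno. exists x; lra. }
  pose proof (HasSum_unique _ _ _ Hrow0 (P_row a)). lra.
Qed.

Lemma HasSum_evolve r i : subprob r -> HasSum (fun j => r j * P j i) (evolve r i).
Proof.
  intros [Hr Hfin].
  destruct (HasSum_bounded (fun j => r j * P j i) 1) as [s [Hs _]].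
  - intros x. apply Rmult_le_pos; auto using P_ge0.
  - intros l Hl. eapply Rle_trans; [|apply (Hfin l Hl)]. apply finsum_le. intros x _.
    pose proof (P_le1 x i). pose proof (P_ge0 x i). specialize (Hr x). nra.
  - unfold evolve. rewrite (tsum_HasSum _ s Hs). auto.
Qed.

Lemma subprob_evolve r : subprob r -> subprob (evolve r).
Proof.
  intros Hsub. pose proof Hsub as [Hr Hfin]. split.
  - intros i. apply (HasSum_ge0 (fun j => r j * P j i)); [|apply HasSum_evolve; auto].
    intros x. apply Rmult_le_pos; auto using P_ge0.
  - intros l Hl.
    pose proof (HasSum_finsum l (fun j i => r j * P j i) (evolve r)
                  (fun i _ => HasSum_evolve r i Hsub)) as Hsum.
    destruct (HasSum_bounded r 1 Hr Hfin) as [sr [Hsr Hsr1]].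
    enough (finsum l (evolve r) <= sr) by lra.
    apply (HasSum_le _ _ _ _ Hsum Hsr). intros j. simpl. rewrite finsum_scal.
    pose proof (proj2 (subprob_row j) l Hl). specialize (Hr j). nra.
Qed.

Lemma evolve_pos r j i : subprob r -> r j > 0 -> P j i > 0 -> evolve r i > 0.
Proof.
  intros Hsub Hj Hji. pose proof Hsub as [Hr _].
  enough (r j * P j i <= evolve r i) by nra.
  apply (term_le_HasSum (fun j => r j * P j i)); [|apply HasSum_evolve; auto].
  intros x. apply Rmult_le_pos; auto using P_ge0.
Qed.

Lemma evolve_dirac a : evolve (dirac a) = P a.
Proof.
  apply functional_extensionality. intros i. unfold evolve.
  rewrite (tsum_HasSum _ (dirac a a * P a i)).
  - unfold dirac. destruct (Ldec a a); [ring | congruence].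
  - apply (HasSum_single (fun j => dirac a j * P j i)). intros x Hx.
    unfold dirac. destruct (Ldec x a); [contradiction | ring].
Qed.

Lemma Ppow_S n a : Ppow P (S n) a = evolve (Ppow P n a).
Proof. reflexivity. Qed.

Lemma subprob_Ppow n a : subprob (Ppow P n a).
Proof.
  induction n; [apply subprob_row|]. rewrite Ppow_S. apply subprob_evolve; auto.
Qed.

End Chain.

Lemma Cx_ext (z w : Cx) : re z = re w -> im z = im w -> z = w.
Proof. destruct z, w; simpl; intros; subst; auto. Qed.

Lemma StrongLim_const {L : Type} (d : L -> Cx) : StrongLim (fun _ => d) d.
Proof.
  intros v _. rewrite tsum_0.
  - intros eps Heps. exists O. intros. unfold R_dist. rewrite Rminus_0_r, Rabs_R0. lra.
  - intros x. unfold cmod2, Cmul, Csub. simpl. ring.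
Qed.

(* Testing against the unit vector at [j] isolates the [j]-th diagonal entry. *)
Lemma StrongLim_const_unique {L : Type} (d d0 : L -> Cx) :
  StrongLim (fun _ => d) d0 -> d = d0.
Proof.
  intros Hlim. apply functional_extensionality; intros j.
  set (v := fun x => if Ldec x j then C1 else C0).
  set (c := cmod2 (Csub (d j) (d0 j))).
  assert (Hsingle : forall x, x <> j -> cmod2 (Cmul (Csub (d x) (d0 x)) (v x)) = 0).
  { intros x Hx. unfold v. destruct (Ldec x j); [contradiction|].
    unfold cmod2, Cmul, C0; simpl. ring. }
  assert (Hv : exists s, HasSum (fun x => cmod2 (v x)) s).
  { exists (cmod2 (v j)). apply (HasSum_single (fun x => cmod2 (v x))). intros x Hx. unfold v.
    destruct (Ldec x j); [contradiction|]. unfold cmod2, C0; simpl; ring. }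
  assert (Hc : tsum (fun x => cmod2 (Cmul (Csub (d x) (d0 x)) (v x))) = c).
  { rewrite (tsum_HasSum _ _ (HasSum_single _ j Hsingle)).
    unfold v. destruct (Ldec j j); [|congruence]. unfold c, cmod2, Cmul, C1; simpl. ring. }
  specialize (Hlim v Hv). simpl in Hlim. rewrite Hc in Hlim.
  assert (Hc0 : c = 0).
  { assert (0 <= c) by (unfold c, cmod2; nra).
    destruct (Req_dec c 0) as [|Hne]; auto. exfalso.
    destruct (Hlim c) as [N HN]; [lra|]. specialize (HN N (le_n N)).
    unfold R_dist in HN. rewrite Rminus_0_r, Rabs_right in HN; lra. }
  unfold c, cmod2, Csub in Hc0. simpl in Hc0.
  destruct (Rplus_sqr_eq_0 _ _ Hc0). apply Cx_ext; lra.
Qed.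

Section QMC.
Context {L : Type} (P : L -> L -> R) (U : L -> L -> Cx) (Hstoch : stochastic P)
  (HU : forall i j, cmod2 (U i j) = 1) (rho0 : L -> R) (Hrho0 : subprob rho0).

Notation rho := (rho_n P U rho0).

Lemma sqrt_P_sq j i : sqrt (P j i) * sqrt (P j i) = P j i.
Proof. apply sqrt_sqrt, (P_ge0 P Hstoch). Qed.

Lemma Mmap_evolve r : Mmap P U r = evolve P r.
Proof.
  apply functional_extensionality. intros i. unfold Mmap, evolve. f_equal.
  apply functional_extensionality. intros j.
  pose proof (sqrt_P_sq j i) as Hs. pose proof (HU i j) as Hu.
  unfold Bop, Cmul, Cscale, Creal, Cconj, cmod2 in *. simpl.
  destruct (U i j) as [ur ui]; simpl in *.
  set (s := sqrt (P j i)) in *. rewrite <- Hs.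
  transitivity (s * s * (ur * ur + ui * ui) * r j); [ring|]. rewrite Hu. ring.
Qed.

Lemma rho_n_S n : rho (S n) = evolve P (rho n).
Proof. apply Mmap_evolve. Qed.

Lemma subprob_rho_n n : subprob (rho n).
Proof. induction n; [exact Hrho0|]. rewrite rho_n_S. apply subprob_evolve; auto. Qed.

Lemma rho_n_S_neq0 n j i : rho n j <> 0 -> P j i <> 0 -> rho (S n) i <> 0.
Proof.
  intros Hj Hji. rewrite rho_n_S.
  enough (evolve P (rho n) i > 0) by lra.
  pose proof (proj1 (subprob_rho_n n) j). pose proof (P_ge0 P Hstoch j i).
  apply (evolve_pos P Hstoch _ j); auto using subprob_rho_n; lra.
Qed.

Definition eq_on_supp n (f g : L -> Cx) : Prop := forall j, rho n j <> 0 -> f j = g j.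

Definition supp_ind n : L -> Cx := fun j => if Req_EM_T (rho n j) 0 then C0 else C1.

Lemma Bop_conj_mul (y : L -> Cx) i j :
  Cmul (Cmul (Cconj (Bop P U i j)) (y i)) (Bop P U i j) = Cscale (P j i) (y i).
Proof.
  pose proof (sqrt_P_sq j i) as Hs. pose proof (HU i j) as Hu.
  unfold Bop, Cmul, Cscale, Cconj, cmod2 in *.
  destruct (U i j) as [ur ui]; destruct (y i) as [yr yi]; simpl in *.
  set (s := sqrt (P j i)) in *. rewrite <- Hs.
  apply Cx_ext; simpl.
  - transitivity (s * s * (ur * ur + ui * ui) * yr); [ring|]. rewrite Hu. ring.
  - transitivity (s * s * (ur * ur + ui * ui) * yi); [ring|]. rewrite Hu. ring.
Qed.

Lemma Ecal_on_supp n x y j : rho n j <> 0 ->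
  Ecal P U rho0 n x y j = Cmul (x j) (ctsum (fun i => Cscale (P j i) (y i))).
Proof.
  intros Hj. unfold Ecal. destruct (Req_EM_T (rho n j) 0); [contradiction|].
  f_equal.
  - apply Cx_ext; simpl; field; auto.
  - f_equal. apply functional_extensionality; intros i. apply Bop_conj_mul.
Qed.

Lemma Ecal_off_supp n x y j : rho n j = 0 -> Ecal P U rho0 n x y j = C0.
Proof.
  intros Hj. unfold Ecal. destruct (Req_EM_T (rho n j) 0); [auto | contradiction].
Qed.

(* The transitions out of [supp rho_n] land in [supp rho_(n+1)], so the second
   argument is only ever read there. *)
Lemma Ecal_eq_on_supp n x x' y y' :
  eq_on_supp n x x' -> eq_on_supp (S n) y y' -> Ecal P U rho0 n x y = Ecal P U rho0 n x' y'.
Proof.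
  intros Hx Hy. apply functional_extensionality; intros j.
  destruct (Req_dec (rho n j) 0) as [Hj|Hj].
  - rewrite !Ecal_off_supp; auto.
  - rewrite !Ecal_on_supp, Hx by auto. do 2 f_equal.
    apply functional_extensionality; intros i.
    destruct (Req_dec (P j i) 0) as [Hji|Hji].
    + rewrite Hji. apply Cx_ext; simpl; ring.
    + rewrite Hy; eauto using rho_n_S_neq0.
Qed.

Lemma Ecal_I_I n : Ecal P U rho0 n Iop Iop = supp_ind n.
Proof.
  apply functional_extensionality; intros j. unfold supp_ind.
  destruct (Req_EM_T (rho n j) 0) as [Hj|Hj].
  - apply Ecal_off_supp; auto.
  - rewrite Ecal_on_supp by auto. unfold ctsum, Iop, Cscale, C1; simpl.
    rewrite (tsum_HasSum (fun i => P j i * 1) 1).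
    + rewrite tsum_0 by (intros; ring). apply Cx_ext; simpl; ring.
    + replace (fun i => P j i * 1) with (P j) by
        (apply functional_extensionality; intros; ring).
      apply (P_row P Hstoch).
Qed.

Lemma supp_ind_eq_on_supp n : eq_on_supp n (supp_ind n) Iop.
Proof.
  intros j Hj. unfold supp_ind. destruct (Req_EM_T (rho n j) 0); [contradiction | auto].
Qed.

Lemma Ecal_I_supp_ind n : Ecal P U rho0 n Iop (supp_ind (S n)) = supp_ind n.
Proof.
  rewrite <- (Ecal_I_I n). apply Ecal_eq_on_supp; [intros j _; auto | apply supp_ind_eq_on_supp].
Qed.

Lemma iterE_supp_ind k : forall n, iterE P U rho0 n k = supp_ind n.
Proof.
  induction k as [|k IH]; intros n; simpl.
  - apply Ecal_I_I.
  - rewrite IH. apply Ecal_I_supp_ind.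
Qed.

Lemma bbar_supp_ind n : bbar P U rho0 n = supp_ind n.
Proof.
  unfold bbar.
  replace (fun k => iterE P U rho0 n k) with (fun _ : nat => supp_ind n)
    by (apply functional_extensionality; intros; rewrite iterE_supp_ind; auto).
  symmetry. apply StrongLim_const_unique.
  apply (epsilon_spec (inhabits Iop) (fun d => StrongLim (fun _ => supp_ind n) d)).
  exists (supp_ind n). apply StrongLim_const.
Qed.

Lemma Eseq_trivial l : forall n, (forall k, eq_on_supp (n + k) (nth k l Iop) Iop) ->
  Eseq P U rho0 n l = bbar P U rho0 n.
Proof.
  induction l as [|x l IH]; intros n Hl; simpl; auto.
  rewrite IH, !bbar_supp_ind, <- (Ecal_I_supp_ind n).
  - apply Ecal_eq_on_supp; [|intros j _; auto].
    specialize (Hl O). rewrite Nat.add_0_r in Hl. exact Hl.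
  - intros k. specialize (Hl (S k)). rewrite Nat.add_succ_r in Hl. exact Hl.
Qed.

(* Lists are compared entrywise with the padding value [Iop], which is how
   [Eseq] reads a list beyond its end. *)
Lemma Eseq_eq_on_supp l1 : forall l2 n,
  (forall k, eq_on_supp (n + k) (nth k l1 Iop) (nth k l2 Iop)) ->
  Eseq P U rho0 n l1 = Eseq P U rho0 n l2.
Proof.
  induction l1 as [|x l1 IH]; intros l2 n Hl.
  - symmetry. apply Eseq_trivial. intros k j Hj. symmetry.
    specialize (Hl k j Hj). destruct k; auto.
  - destruct l2 as [|y l2].
    + apply Eseq_trivial. intros k. specialize (Hl k). destruct k; auto.
    + simpl. apply Ecal_eq_on_supp.
      * specialize (Hl O). rewrite Nat.add_0_r in Hl. exact Hl.
      * intros j _. rewrite (IH l2); auto. intros k. specialize (Hl (S k)).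
        rewrite Nat.add_succ_r in Hl. exact Hl.
Qed.

Lemma nth_map_seq0 {A : Type} (F : nat -> A) N k d :
  (k < N)%nat -> nth k (map F (seq 0 N)) d = F k.
Proof.
  intros Hk. rewrite nth_indep with (d' := F O) by (rewrite length_map, length_seq; auto).
  rewrite map_nth, seq_nth; auto.
Qed.

Lemma sandwich_eq_on_supp (p : L -> Cx) n0 m al k :
  (forall n j, (n0 <= n)%nat -> rho n j <> 0 -> p j = C1) ->
  eq_on_supp k (nth k (sandwich p n0 m al) Iop) (nth k al Iop).
Proof.
  intros Hp j Hj. unfold sandwich.
  destruct (Nat.lt_ge_cases k (m + length al)) as [Hk|Hk].
  - rewrite nth_map_seq0 by auto.
    destruct (Nat.ltb_spec k n0); auto.
    rewrite (Hp k j) by auto. apply Cx_ext; simpl; ring.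
  - rewrite !nth_overflow; auto.
    + apply (Nat.le_trans _ (m + length al)); auto. apply Nat.le_add_l.
    + rewrite length_map, length_seq; auto.
Qed.

(* The sandwiched sequence is even constant in the truncation length, so no
   genuine limit is involved. *)
Lemma QMC_reducible_of_supp_incl (A : L -> Prop) n0 :
  (exists j, A j) -> (exists j, ~ A j) ->
  (forall n j, (n0 <= n)%nat -> rho n j <> 0 -> A j) ->
  QMC_reducible P U rho0.
Proof.
  intros [j1 Hj1] [j0 Hj0] Hsupp.
  set (p := fun k => if excluded_middle_informative (A k) then C1 else C0).
  assert (HC10 : C1 <> C0) by (intros E; injection E; lra).
  exists p, n0. split; [|split; [|split]].
  - intros j. unfold p. destruct (excluded_middle_informative _);
      split; apply Cx_ext; simpl; ring.
  - exists j1. unfold p. destruct (excluded_middle_informative _); tauto.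
  - exists j0. unfold p. destruct (excluded_middle_informative _); [tauto|].
    intros E. apply HC10. auto.
  - intros al _.
    assert (Hp1 : forall n j, (n0 <= n)%nat -> rho n j <> 0 -> p j = C1).
    { intros n j Hn Hj. unfold p. destruct (excluded_middle_informative _); eauto.
      exfalso. eauto. }
    replace (fun m => E0 P U rho0 (sandwich p n0 m al)) with (fun _ : nat => E0 P U rho0 al)
      by (apply functional_extensionality; intros m; symmetry;
          apply Eseq_eq_on_supp; intros k; apply sandwich_eq_on_supp; auto).
    apply StrongLim_const.
Qed.

End QMC.

Lemma rho_n_dirac {L : Type} (P : L -> L -> R) (U : L -> L -> Cx) (a : L) n :
  stochastic P -> (forall i j, cmod2 (U i j) = 1) ->
  rho_n P U (dirac a) (S n) = Ppow P n a.
Proof.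
  intros Hstoch HU. induction n as [|n IH].
  - rewrite (rho_n_S P U Hstoch HU). apply evolve_dirac.
  - rewrite (rho_n_S P U Hstoch HU), IH. reflexivity.
Qed.

Theorem mainTheorem13 (L : Type) (P : L -> L -> R) (U : L -> L -> Cx)
  (Hcount : exists f : L -> nat, forall x y, f x = f y -> x = y)
  (Hstoch : stochastic P)
  (HU : forall i j, cmod2 (U i j) = 1)
  (Hred : reducible_chain P) :
  exists rho0 : L -> R, prob_measure rho0 /\ QMC_reducible P U rho0.
Proof.
  destruct (reducible_chain_not_leads P Hred) as [a [b Hab]].
  exists (dirac a). split; [apply prob_measure_dirac|].
  apply (QMC_reducible_of_supp_incl P U Hstoch HU (dirac a)
           (prob_measure_subprob _ (prob_measure_dirac a)) (leads P a) 1).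
  - destruct (row_has_pos P Hstoch a) as [k Hk]. exists k, O. exact Hk.
  - exists b. exact Hab.
  - intros [|n] j Hn Hj; [inversion Hn|].
    rewrite (rho_n_dirac P U a n Hstoch HU) in Hj. exists n.
    pose proof (proj1 (subprob_Ppow P Hstoch n a) j). lra.
Qed.
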